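(* If $n\ge4$ and $h$ is odd with $h\ge\frac{3(n-1)}{n-3}$, then there exists $p\in\mathcal P$ such that $D_{\mu(p)}(p)=D_{\mu(p^r)}(p^r)=\{n\}$.
   Context: Let $n,h\ge2$ be integers, $N=\{1,\dots,n\}$, $H=\{1,\dots,h\}$. $\mathcal P$ is the set of $h$-tuples $p=(p_1,\dots,p_h)$ of linear orders on $N$; $p^r$ is obtained by reversing each $p_i$; $x>_{p_i}y$ means $x\ne y$ and $p_i$ ranks $x$ above $y$. For an integer $\mu$ with $h/2<\mu\le h$, $D_\mu(p)=\{x\in N: \forall y\in N,\ |\{i: y>_{p_i}x\}|<\mu\}$, and $\mu(p)=\min\{\mu\in\mathbb N\cap(h/2,h]: D_\mu(p)\neq\varnothing\}$. *)

From mathcomp Require Import all_boot all_fingroup.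
Set Implicit Arguments. Unset Strict Implicit. Unset Printing Implicit Defensive.

(* Alternatives N = {1,...,n} are encoded as 'I_n : paper's alternative k is
   the ordinal of value k-1.  A linear order on N is encoded as a bijection
   (permutation) from alternatives to positions: position 0 is the top. *)

Definition linord (n : nat) := {perm 'I_n}.
Definition profile (n h : nat) := 'I_h -> linord n.

Definition prefers n (o : linord n) (x y : 'I_n) : bool := (o x < o y)%N.

Definition rev_linord n (o : linord n) : linord n := (o * perm (@rev_ord_inj n))%g.
Definition rev_profile n h (p : profile n h) : profile n h :=
  fun i => rev_linord (p i).

Definition Dmu n h (mu : nat) (p : profile n h) : {set 'I_n} :=
  [set x | [forall y : 'I_n, #|[set i : 'I_h | prefers (p i) y x]| < mu]].

(* mu(p) = least integer mu with h/2 < mu <= h and D_mu(p) nonempty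
   (candidates h./2.+1, ..., h in increasing order; default h, never used since
   D_h(p) is always nonempty). *)
Definition mu_of n h (p : profile n h) : nat :=
  head h [seq m <- iota h./2.+1 (h - h./2) | Dmu m p != set0].

From mathcomp Require Import all_boot all_fingroup zify.
Set Implicit Arguments. Unset Strict Implicit. Unset Printing Implicit Defensive.

(* Let k = n - 1 and put the first k alternatives in a Condorcet cycle: voter j ranks them in the
   rotation starting at j mod k, and puts alternative n on top if j <= h/2 and at the bottom
   otherwise. Every alternative beats n in (h-1)/2 ballots of p and (h+1)/2 ballots of p^r, so n
   lies in D_{(h+1)/2}(p) and in D_{(h+3)/2}(p^r). Any other x loses to its cyclic predecessor in
   p (to its successor in p^r) in all ballots except those whose rotation starts at x (resp. at
   its successor), at most ceil(h/k) of them; h >= 3k/(k-2) makes this fewer than (h-1)/2, so x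
   lies in neither set. Since D_mu grows with mu, D_{mu(p)}(p) and D_{mu(p^r)}(p^r) are nonempty
   subsets of these singletons. *)

Definition votes n h (p : profile n h) (y x : 'I_n) : nat :=
  #|[set i | prefers (p i) y x]|.

Lemma votes_rev n h (p : profile n h) y x : votes (rev_profile p) y x = votes p x y.
Proof.
apply: eq_card => i; rewrite !inE /prefers /rev_linord !permM !permE /=.
by have := ltn_ord (p i x); have := ltn_ord (p i y); move=> *; apply/idP/idP; lia.
Qed.

Lemma votes_xx n h (p : profile n h) x : votes p x x = 0.
Proof. by apply/eqP; rewrite cards_eq0; apply/eqP/setP => i; rewrite !inE /prefers ltnn. Qed.

Lemma votesC n h (p : profile n h) x y : x != y -> votes p x y + votes p y x = h.
Proof.
move=> neq_xy; set A := [set i | prefers (p i) x y].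
transitivity (#|A| + #|~: A|); last by rewrite cardsC card_ord.
congr (_ + _); apply: eq_card => i; rewrite !inE /prefers ltnNge leq_eqVlt.
by rewrite val_eqE (inj_eq perm_inj) (negbTE neq_xy).
Qed.

Section LinordOfKey.
Variables (n : nat) (f : 'I_n -> nat).
Hypothesis f_inj : injective f.

Lemma card_key_below_lt x : #|[set y | f y < f x]| < n.
Proof.
rewrite -[X in _ < X]card_ord -cardsT; apply: proper_card; apply/properP; split.
  exact: subsetT.
by exists x; rewrite !inE ?ltnn.
Qed.

Definition key_rank x : 'I_n := Ordinal (card_key_below_lt x).

Lemma key_rank_lt x y : (key_rank y < key_rank x) = (f y < f x).
Proof.
have mono u v : f v < f u -> key_rank v < key_rank u.
  move=> lt_vu; apply: proper_card; apply/properP; split.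
    by apply/subsetP=> w; rewrite !inE => /ltn_trans; apply.
  by exists v; rewrite !inE ?ltnn.
case: (ltngtP (f y) (f x)) => [/mono -> //|/mono|/f_inj -> //]; last by rewrite ltnn.
by move/ltnW; rewrite leqNgt => /negbTE.
Qed.

Lemma key_rank_inj : injective key_rank.
Proof.
move=> x y eq_xy; apply/eqP; apply: contraT => neq_xy.
have := key_rank_lt x y; have := key_rank_lt y x; rewrite eq_xy ltnn.
by case: (ltngtP (f x) (f y)) => // /f_inj/eqP; rewrite (negbTE neq_xy).
Qed.

Definition linord_of_key : linord n := perm key_rank_inj.

Lemma prefers_linord_of_key y x : prefers linord_of_key y x = (f y < f x).
Proof. by rewrite /prefers !permE key_rank_lt. Qed.

End LinordOfKey.

Lemma Dmu_subset n h (p : profile n h) m1 m2 : m1 <= m2 -> Dmu m1 p \subset Dmu m2 p.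
Proof.
move=> le_m; apply/subsetP => x; rewrite !inE => /forallP lt_m1.
by apply/forallP => y; apply: leq_trans (lt_m1 y) le_m.
Qed.

Lemma head_filter_iota (P : pred nat) d a b m : a <= m < a + b -> P m ->
  P (head d [seq i <- iota a b | P i]) /\ head d [seq i <- iota a b | P i] <= m.
Proof.
elim: b a => [|b IHb] a /andP [le_am lt_m] Pm; first by lia.
rewrite /=; case: ifP => Pa //=.
have neq_am : a != m by apply: contraFneq Pa => ->.
by apply: IHb => //; apply/andP; split; lia.
Qed.

Lemma mu_ofP n h (p : profile n h) m : h./2 < m <= h -> Dmu m p != set0 ->
  Dmu (mu_of p) p != set0 /\ mu_of p <= m.
Proof.
move=> m_range; apply: head_filter_iota.
by have := odd_double_half h; move: m_range => /andP [*]; apply/andP; split; lia.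
Qed.

Lemma Dmu_mu_of n h (p : profile n h) m z : h./2 < m <= h -> Dmu m p = [set z] ->
  Dmu (mu_of p) p = [set z].
Proof.
move=> m_range Dm; have [ne_mu le_mu] : Dmu (mu_of p) p != set0 /\ mu_of p <= m.
  by apply: mu_ofP; rewrite // Dm; apply/set0Pn; exists z; rewrite inE.
by have := Dmu_subset p le_mu; rewrite Dm subset1 (negbTE ne_mu) orbF => /eqP.
Qed.

Lemma Dmu_set1 n h (p : profile n h) z M :
  (forall y, votes p y z <= M) -> (forall x, x != z -> exists y, M < votes p y x) ->
  Dmu M.+1 p = [set z].
Proof.
move=> z_votes beaten; apply/setP => x; rewrite !inE.
apply/forallP/idP => [x_in | /eqP -> y]; last by rewrite ltnS z_votes.
apply: contraT => /beaten [y]; rewrite ltnNge.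
by have := x_in y; rewrite ltnS => ->.
Qed.

Lemma card_ord_lt h t : t <= h -> #|[set j : 'I_h | j < t]| = t.
Proof. by move=> le_th; rewrite -sum1dep_card (big_ord_narrow le_th) sum1_card card_ord. Qed.

Lemma card_residue_class k h r : 0 < k ->
  k * #|[set j : 'I_h | j %% k == r]| <= h + k.-1.
Proof.
move=> k_gt0; have quo_lt (j : 'I_h) : j %/ k < (h + k.-1) %/ k.
  by have := ltn_ord j; nia.
pose quo (j : 'I_h) : 'I_((h + k.-1) %/ k) := Ordinal (quo_lt j).
have quo_inj : {in [set j : 'I_h | j %% k == r] &, injective quo}.
  move=> i j; rewrite !inE => /eqP ri /eqP rj [eq_q]; apply: val_inj.
  by rewrite /= (divn_eq i k) (divn_eq j k) eq_q ri rj.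
have := @leq_card_in _ _ quo _ quo_inj; rewrite card_ord -(leq_pmul2l k_gt0) => /leq_trans; apply.
by rewrite mulnC leq_divM.
Qed.

Lemma card_residue_class_lt_half k h r : 3 <= k -> odd h -> 3 * k <= h * (k - 2) ->
  #|[set j : 'I_h | j %% k == r]| < h./2.
Proof.
move=> k_ge3 h_odd h_ge; have k_gt0 : 0 < k by lia.
by have := card_residue_class h r k_gt0; nia.
Qed.

Lemma ltn_neq_ord_max k (x : 'I_k.+1) : x != ord_max -> x < k.
Proof. by rewrite -val_eqE /=; have := ltn_ord x; lia. Qed.

Definition rot_pos k s x := if s <= x then x - s else x + k - s.
Definition cyc_succ k y := if y.+1 == k then 0 else y.+1.

Lemma rot_pos_lt k s x : s < k -> x < k -> rot_pos k s x < k.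
Proof. by rewrite /rot_pos; case: ifP; lia. Qed.

Lemma rot_pos_inj k s x y : s < k -> x < k -> y < k -> rot_pos k s x = rot_pos k s y -> x = y.
Proof. by rewrite /rot_pos; repeat case: ifP; lia. Qed.

Lemma rot_pos_succ k s y : s < k -> y < k ->
  (rot_pos k s y < rot_pos k s (cyc_succ k y)) = (cyc_succ k y != s).
Proof.
rewrite /cyc_succ => *; case: ifP => ?; rewrite /rot_pos;
  by repeat case: ifP => ?; apply/idP/idP; lia.
Qed.

Section CyclicProfile.
Variables k h : nat.
Hypotheses (k_gt0 : 0 < k) (h_odd : odd h).

Definition cyclic_key (j : 'I_h) (x : 'I_k.+1) : nat :=
  if x == ord_max then (if j <= h./2 then 0 else k.+1) else (rot_pos k (j %% k) x).+1.

Lemma cyclic_key_inj j : injective (cyclic_key j).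
Proof.
move=> x y; rewrite /cyclic_key.
have s_lt := ltn_pmod j k_gt0.
have [->|x_max] := eqVneq x ord_max; have [-> //|y_max] := eqVneq y ord_max.
- have /(rot_pos_lt s_lt) := ltn_neq_ord_max y_max; case: ifP; lia.
- have /(rot_pos_lt s_lt) := ltn_neq_ord_max x_max; case: ifP; lia.
move=> [/rot_pos_inj eq_xy]; apply: val_inj; apply: eq_xy => //; exact: ltn_neq_ord_max.
Qed.

Definition cyclic_profile : profile k.+1 h := fun j => linord_of_key (@cyclic_key_inj j).

Lemma prefers_cyclic j y x : prefers (cyclic_profile j) y x = (cyclic_key j y < cyclic_key j x).
Proof. exact: prefers_linord_of_key. Qed.

Lemma votes_ord_max x : x != ord_max -> votes cyclic_profile ord_max x = h./2.+1.
Proof.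
move=> x_max; rewrite -[RHS](@card_ord_lt h); last by have := odd_double_half h; rewrite h_odd; lia.
apply: eq_card => j; rewrite !inE prefers_cyclic /cyclic_key eqxx (negbTE x_max) ltnS.
by have := rot_pos_lt (ltn_pmod j k_gt0) (ltn_neq_ord_max x_max); case: ifP; lia.
Qed.

Lemma votes_cyc_succ (y x : 'I_k.+1) : y != ord_max -> x = cyc_succ k y :> nat ->
  votes cyclic_profile y x = h - #|[set j : 'I_h | j %% k == x]|.
Proof.
move=> y_max x_succ; have y_lt := ltn_neq_ord_max y_max.
have x_max : x != ord_max.
  by apply/eqP => x_eq; move: x_succ; rewrite x_eq /cyc_succ /=; case: ifP; lia.
set A := [set j : 'I_h | j %% k == x].
transitivity #|~: A|; last by have := cardsC A; rewrite card_ord => /(canRL (addKn _)).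
apply: eq_card => j; rewrite !inE prefers_cyclic /cyclic_key (negbTE y_max) (negbTE x_max).
by rewrite ltnS x_succ rot_pos_succ ?ltn_pmod // eq_sym.
Qed.

Lemma exists_cyc_pred (x : 'I_k.+1) :
  x != ord_max -> exists2 y : 'I_k.+1, y != ord_max & x = cyc_succ k y :> nat.
Proof.
move=> x_max; have x_lt := ltn_neq_ord_max x_max.
set y := if x == 0 :> nat then k.-1 else x.-1.
have y_lt : y < k by rewrite /y; case: ifP; lia.
exists (inord y); first by rewrite -val_eqE /= inordK //; lia.
rewrite /cyc_succ inordK ?(ltn_trans y_lt) // /y.
by have [->|x_pos] := eqVneq (x : nat) 0; rewrite ?(negbTE x_pos); case: ifP; lia.
Qed.

Hypothesis residue_class_small : forall x : 'I_k.+1, #|[set j : 'I_h | j %% k == x]| < h./2.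

Lemma residue_class_margin (x : 'I_k.+1) : h./2.+1 < h - #|[set j : 'I_h | j %% k == x]|.
Proof. by have := residue_class_small x; have := odd_double_half h; rewrite h_odd; lia. Qed.

Lemma Dmu_cyclic : Dmu h./2.+1 cyclic_profile = [set ord_max].
Proof.
apply: Dmu_set1 => [y | x x_max].
  have [->|y_max] := eqVneq y ord_max; first by rewrite votes_xx.
  have := votesC cyclic_profile y_max; rewrite votes_ord_max //.
  by have := odd_double_half h; rewrite h_odd; lia.
have [y y_max x_succ] := exists_cyc_pred x_max.
by exists y; rewrite (votes_cyc_succ y_max x_succ); have := residue_class_margin x; lia.
Qed.

Lemma Dmu_rev_cyclic : Dmu h./2.+2 (rev_profile cyclic_profile) = [set ord_max].
Proof.
apply: Dmu_set1 => [y | x x_max]; rewrite ?votes_rev.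
  by have [->|y_max] := eqVneq y ord_max; rewrite ?votes_xx ?votes_ord_max.
have x_lt := ltn_neq_ord_max x_max.
have y_lt : cyc_succ k x < k.+1 by rewrite /cyc_succ; case: ifP; lia.
exists (Ordinal y_lt); rewrite votes_rev (votes_cyc_succ x_max) //.
exact: residue_class_margin.
Qed.

End CyclicProfile.

Theorem proposition8 (n h : nat) :
  (4 <= n)%N -> (2 <= h)%N -> odd h -> (3 * (n - 1) <= h * (n - 3))%N ->
  exists p : profile n h,
    Dmu (mu_of p) p = [set x : 'I_n | val x == n.-1] /\
    Dmu (mu_of (rev_profile p)) (rev_profile p) = [set x : 'I_n | val x == n.-1].
Proof.
case: n => // k k_ge3 _ h_odd; rewrite !subSS subn0 => h_ge.
have residue_small (x : 'I_k.+1) := @card_residue_class_lt_half k h x k_ge3 h_odd h_ge.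
have k_gt0 : 0 < k by lia.
have h_half : h./2.+2 <= h.
  by have := residue_small ord_max; have := odd_double_half h; rewrite h_odd; lia.
have -> : [set x : 'I_k.+1 | val x == k] = [set ord_max] by apply/setP => x; rewrite !inE.
exists (cyclic_profile k_gt0 h_odd); split.
  by apply: Dmu_mu_of (Dmu_cyclic k_gt0 h_odd residue_small); apply/andP; split; lia.
by apply: Dmu_mu_of (Dmu_rev_cyclic k_gt0 h_odd residue_small); apply/andP; split; lia.
Qed.
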